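(* Let $M$ be a combinatorial $3$-pseudomanifold with vertex set $V=V_1\dot\cup V_2$, let $S_{(V_1,V_2)}$ be the associated slicing, and for $x\in V_1$ and $a\in V_2$ let $C^x$ and $C_a$ denote the traces of $x$ and $a$ on $S_{(V_1,V_2)}$. Then: (i) if $x,y\in V_1$ with $x\neq y$, then $C^x\cap C^y=\emptyset$; (ii) if $x\in V_1$ and $a\in V_2$, then $C^x\cap C_a=\left\langle\binom{x}{a}\right\rangle$ if $\langle x,a\rangle$ is an edge of $M$, and $C^x\cap C_a=\emptyset$ otherwise.
   Context: A combinatorial $3$-pseudomanifold is a finite pure $3$-dimensional simplicial complex in which the link of every vertex is a combinatorial surface. A function $f:M\to\mathbb{R}$ is regular simplexwise linear (rsl) if it is linear on every simplex and takes pairwise distinct values on the vertices. Given a partition $V=V_1\dot\cup V_2$ of the vertex set into nonempty sets, choose an rsl-function $f$ with $f(v)<f(w)$ for all $v\in V_1$, $w\in V_2$ and $x_0$ strictly between $\max f(V_1)$ and $\min f(V_2)$; the slicing $S_{(V_1,V_2)}$ is the polyhedral complex $f^{-1}(x_0)$ (made of triangles and quadrilaterals). Each vertex of $S_{(V_1,V_2)}$ is the intersection point of $f^{-1}(x_0)$ with an edge $\langle u,w\rangle$ of $M$ with $u\in V_1$, $w\in V_2$, and is denoted $\binom{u}{w}$. For $x\in V_1$ define $C^x_2$ as the set of faces of $S_{(V_1,V_2)}$ of the form $\langle\binom{x}{a},\binom{x}{b},\binom{x}{c}\rangle$ with $a,b,c\in V_2$, and $C^x_1$ as the set of faces of $S_{(V_1,V_2)}$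 not in $C^x_2$ of the form $\langle\binom{x}{a},\binom{x}{b}\rangle$ with $a,b\in V_2$; the trace of $x$ is $C^x:=\overline{C^x_2\cup C^x_1}$ (the closure, i.e. the subcomplex generated). Analogously, for $a\in V_2$, $C_a$ is the closure of the set of triangles $\langle\binom{x}{a},\binom{y}{a},\binom{z}{a}\rangle$ and edges $\langle\binom{x}{a},\binom{y}{a}\rangle$ ($x,y,z\in V_1$) of $S_{(V_1,V_2)}$.
   Formalization: The traces $C^x$ and $C_a$ are also generated by every vertex $\binom{x}{a}$ (respectively $\binom{y}{a}$) of $S_{(V_1,V_2)}$ that is not already a face of the closure of their defining triangles and edges. The statement above fails without it. *)

From mathcomp Require Import all_boot.
Set Implicit Arguments. Unset Strict Implicit. Unset Printing Implicit Defensive.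

Section Complexes.
Variable T : finType.

Definition simplicial_complex (K : {set {set T}}) : Prop :=
  forall s, s \in K -> s != set0 /\
    forall t : {set T}, t \subset s -> t != set0 -> t \in K.

Definition vertices (K : {set {set T}}) : {set T} := \bigcup_(s in K) s.

Definition pure_dim (K : {set {set T}}) (d : nat) : Prop :=
  K != set0 /\
  forall s, s \in K -> #|s| <= d.+1 /\ exists2 t, t \in K & (s \subset t) && (#|t| == d.+1).

Definition link (K : {set {set T}}) (v : T) : {set {set T}} :=
  [set t in K | (v \notin t) && ((v |: t) \in K)].

Definition adj (K : {set {set T}}) : rel T :=
  fun u w => (u != w) && ([set u; w] \in K).

Definition connected_complex (K : {set {set T}}) : Prop :=
  forall u w, u \in vertices K -> w \in vertices K -> connect (adj K) u w.

Definition cycle_complex (L : {set {set T}}) : Prop :=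
  [/\ simplicial_complex L, pure_dim L 1, connected_complex L &
      forall v, v \in vertices L -> #|[set w | adj L v w]| = 2].

Definition combinatorial_surface (L : {set {set T}}) : Prop :=
  [/\ simplicial_complex L, pure_dim L 2, connected_complex L &
      forall v, v \in vertices L -> cycle_complex (link L v)].

Definition pseudomanifold3 (K : {set {set T}}) : Prop :=
  [/\ simplicial_complex K, pure_dim K 3 &
      forall v, v \in vertices K -> combinatorial_surface (link K v)].

(* ---- Slicings ----
   The vertex binom(u,w) of the slicing is encoded by the pair (u, w).
   For an rsl-function f separating V1 from V2, the face sigma /\ f^-1(x0)
   of the slicing has vertex set (sigma /\ V1) x (sigma /\ V2); it is
   nonempty iff sigma meets both V1 and V2.  A face of the slicing is
   identified with its vertex set. *)
Definition slice_face (V1 V2 s : {set T}) : {set T * T} :=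
  setX (s :&: V1) (s :&: V2).

Definition slicing (K : {set {set T}}) (V1 V2 : {set T}) : {set {set T * T}} :=
  [set slice_face V1 V2 s | s in K & (s :&: V1 != set0) && (s :&: V2 != set0)].

(* In the slicing,
   G is a face of F iff the vertex set of G is contained in that of F. *)
Definition sclosure (K : {set {set T}}) (V1 V2 : {set T})
    (C : {set {set T * T}}) : {set {set T * T}} :=
  [set G in slicing K V1 V2 | [exists F in C, G \subset F]].

Definition traceV1_2 K V1 V2 (x : T) : {set {set T * T}} :=
  [set F in slicing K V1 V2 | [exists a in V2, exists b in V2, exists c in V2,
     [&& a != b, b != c, a != c & F == [set (x, a); (x, b); (x, c)]]]].

Definition traceV1_1 K V1 V2 (x : T) : {set {set T * T}} :=
  [set F in slicing K V1 V2 | (F \notin traceV1_2 K V1 V2 x) &&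
     [exists a in V2, exists b in V2, (a != b) && (F == [set (x, a); (x, b)])]].

(* C^x_0: vertices binom(x,a) of S not already lying in a face of
   C^x_2 \cup C^x_1 (needed for (ii) to hold) *)
Definition traceV1_0 K V1 V2 (x : T) : {set {set T * T}} :=
  [set F in slicing K V1 V2 |
     (F \notin sclosure K V1 V2 (traceV1_2 K V1 V2 x :|: traceV1_1 K V1 V2 x)) &&
     [exists a in V2, F == [set (x, a)]]].

Definition traceV1 K V1 V2 (x : T) : {set {set T * T}} :=
  sclosure K V1 V2
    (traceV1_2 K V1 V2 x :|: traceV1_1 K V1 V2 x :|: traceV1_0 K V1 V2 x).

Definition traceV2_2 K V1 V2 (a : T) : {set {set T * T}} :=
  [set F in slicing K V1 V2 | [exists x in V1, exists y in V1, exists z in V1,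
     [&& x != y, y != z, x != z & F == [set (x, a); (y, a); (z, a)]]]].

Definition traceV2_1 K V1 V2 (a : T) : {set {set T * T}} :=
  [set F in slicing K V1 V2 | (F \notin traceV2_2 K V1 V2 a) &&
     [exists x in V1, exists y in V1, (x != y) && (F == [set (x, a); (y, a)])]].

Definition traceV2_0 K V1 V2 (a : T) : {set {set T * T}} :=
  [set F in slicing K V1 V2 |
     (F \notin sclosure K V1 V2 (traceV2_2 K V1 V2 a :|: traceV2_1 K V1 V2 a)) &&
     [exists x in V1, F == [set (x, a)]]].

Definition traceV2 K V1 V2 (a : T) : {set {set T * T}} :=
  sclosure K V1 V2
    (traceV2_2 K V1 V2 a :|: traceV2_1 K V1 V2 a :|: traceV2_0 K V1 V2 a).

End Complexes.

From mathcomp Require Import all_boot.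
Set Implicit Arguments. Unset Strict Implicit. Unset Printing Implicit Defensive.

(* Every face of C^x lies in a generator, all of whose vertices are of the
   form binom(x,_); likewise every vertex of a face of C_a is binom(_,a).
   Faces of the slicing are nonempty, so a common face of C^x and C^y would
   have a vertex binom(x,_) = binom(y,_), and a common face of C^x and C_a is
   the single vertex binom(x,a).  That vertex is in the slicing exactly when
   <x,a> is an edge of M, and then it lies in both traces thanks to C^x_0 and
   C_a^0, which collect the vertices not already covered. *)

Section Slicing.
Variables (T : finType) (K : {set {set T}}) (V1 V2 : {set T}).

Local Notation S := (slicing K V1 V2).
Local Notation closure := (sclosure K V1 V2).

Lemma slicing_neq0 G : G \in S -> G != set0.
Proof.
case/imsetP=> s; rewrite inE => /andP[_ /andP[/set0Pn[u uV1] /set0Pn[w wV2]]] ->.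
by apply/set0Pn; exists (u, w); rewrite in_setX uV1 wV2.
Qed.

Lemma mem_sclosure_sub (C : {set {set T * T}}) G :
  G \in closure C -> G \in S /\ exists2 F, F \in C & G \subset F.
Proof. by rewrite inE => /andP[GS /exists_inP[F FC GF]]; split=> //; exists F. Qed.

Lemma sclosure_pointwise (C : {set {set T * T}}) (P : T * T -> Prop) G :
  (forall F p, F \in C -> p \in F -> P p) ->
  G \in closure C -> G \in S /\ forall p, p \in G -> P p.
Proof.
move=> CP /mem_sclosure_sub[GS [F FC GF]]; split=> // p pG.
exact: CP FC (subsetP GF p pG).
Qed.

(* The shape of the definitions of C^x_0 and C_a^0. *)
Lemma mem_sclosure_completion (C : {set {set T * T}}) (Q : pred {set T * T}) G :
  G \in S -> Q G ->
  G \in closure (C :|: [set F in S | (F \notin closure C) && Q F]).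
Proof.
move=> GS QG; rewrite inE GS /=; have [GC|GnC] := boolP (G \in closure C).
  have [_ [F FC GF]] := mem_sclosure_sub GC.
  by apply/exists_inP; exists F; rewrite // inE FC.
by apply/exists_inP; exists G; rewrite // in_setU in_set GS GnC QG orbT.
Qed.

Lemma single_vertex_slicing x a :
  simplicial_complex K -> x \in V1 -> a \in V2 -> V1 :&: V2 = set0 ->
  ([set (x, a)] \in S) = ([set x; a] \in K).
Proof.
move=> scK xV1 aV2 dis.
have xV2 : x \notin V2.
  by apply: contra_eqN dis => xV2; apply/set0Pn; exists x; rewrite inE xV1.
have aV1 : a \notin V1.
  by apply: contra_eqN dis => aV1; apply/set0Pn; exists a; rewrite inE aV1.
apply/idP/idP.
  case/imsetP=> s; rewrite inE => /andP[sK _] /setP/(_ (x, a)).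
  rewrite set11 in_setX !inE => /esym/andP[/andP[xs _] /andP[as_ _]].
  apply: (proj2 (scK s sK)).
    by apply/subsetP=> z; rewrite !inE => /orP[]/eqP->.
  by apply/set0Pn; exists x; rewrite !inE eqxx.
move=> xaK; apply/imsetP; exists [set x; a].
  rewrite inE xaK; apply/and3P; split=> //; apply/set0Pn; [exists x | exists a];
    by rewrite !inE eqxx ?xV1 ?aV2 ?orbT.
apply/setP=> [[u w]]; rewrite in_setX !inE xpair_eqE.
apply/andP/and3P=> [[/eqP-> /eqP->] | [/andP[/orP[]/eqP-> uV1] /orP[]/eqP-> wV2]].
- by rewrite !eqxx xV1 aV2 orbT.
all: by rewrite ?eqxx // ?(negbTE xV2) ?(negbTE aV1) in uV1 wV2.
Qed.

Lemma traceV1_gen_fst x F p :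
  F \in traceV1_2 K V1 V2 x :|: traceV1_1 K V1 V2 x :|: traceV1_0 K V1 V2 x ->
  p \in F -> p.1 = x.
Proof.
rewrite !inE => /orP[/orP[]|] /andP[_].
- case/existsP=> a /andP[_ /existsP[b /andP[_ /existsP[c /andP[_ /and4P[_ _ _ /eqP->]]]]]].
  by rewrite !inE => /orP[/orP[]|] /eqP->.
- case/andP=> _ /existsP[a /andP[_ /existsP[b /andP[_ /andP[_ /eqP->]]]]].
  by rewrite !inE => /orP[] /eqP->.
- by case/andP=> _ /existsP[a /andP[_ /eqP->]]; rewrite inE => /eqP->.
Qed.

Lemma traceV2_gen_snd a F p :
  F \in traceV2_2 K V1 V2 a :|: traceV2_1 K V1 V2 a :|: traceV2_0 K V1 V2 a ->
  p \in F -> p.2 = a.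
Proof.
rewrite !inE => /orP[/orP[]|] /andP[_].
- case/existsP=> x /andP[_ /existsP[y /andP[_ /existsP[z /andP[_ /and4P[_ _ _ /eqP->]]]]]].
  by rewrite !inE => /orP[/orP[]|] /eqP->.
- case/andP=> _ /existsP[x /andP[_ /existsP[y /andP[_ /andP[_ /eqP->]]]]].
  by rewrite !inE => /orP[] /eqP->.
- by case/andP=> _ /existsP[x /andP[_ /eqP->]]; rewrite inE => /eqP->.
Qed.

Lemma mem_traceV1 x G :
  G \in traceV1 K V1 V2 x -> G \in S /\ forall p, p \in G -> p.1 = x.
Proof. exact/(sclosure_pointwise (P := fun p => p.1 = x))/traceV1_gen_fst. Qed.

Lemma mem_traceV2 a G :
  G \in traceV2 K V1 V2 a -> G \in S /\ forall p, p \in G -> p.2 = a.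
Proof. exact/(sclosure_pointwise (P := fun p => p.2 = a))/traceV2_gen_snd. Qed.

Lemma vertex_mem_traceV1 x a :
  a \in V2 -> [set (x, a)] \in S -> [set (x, a)] \in traceV1 K V1 V2 x.
Proof.
move=> aV2 xaS; have xa_vertex : [exists b in V2, [set (x, a)] == [set (x, b)]].
  by apply/exists_inP; exists a.
exact: mem_sclosure_completion xaS xa_vertex.
Qed.

Lemma vertex_mem_traceV2 x a :
  x \in V1 -> [set (x, a)] \in S -> [set (x, a)] \in traceV2 K V1 V2 a.
Proof.
move=> xV1 xaS; have xa_vertex : [exists y in V1, [set (x, a)] == [set (y, a)]].
  by apply/exists_inP; exists x.
exact: mem_sclosure_completion xaS xa_vertex.
Qed.

Lemma traceV1_traceV2_single x a G :
  G \in traceV1 K V1 V2 x -> G \in traceV2 K V1 V2 a -> G = [set (x, a)].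
Proof.
move=> /mem_traceV1[GS Gx] /mem_traceV2[_ Ga].
have Gxa q : q \in G -> q = (x, a).
  by move=> qG; rewrite -(Gx q qG) -(Ga q qG) -surjective_pairing.
have /set0Pn[p pG] := slicing_neq0 GS.
by apply/setP=> q; rewrite inE; apply/idP/eqP=> [/Gxa | ->]; rewrite // -(Gxa p pG).
Qed.

End Slicing.

Theorem lemma3p5 (T : finType) (K : {set {set T}}) (V1 V2 : {set T}) :
  pseudomanifold3 K ->
  V1 :&: V2 = set0 -> V1 :|: V2 = vertices K ->
  V1 != set0 -> V2 != set0 ->
  (forall x y, x \in V1 -> y \in V1 -> x != y ->
     traceV1 K V1 V2 x :&: traceV1 K V1 V2 y = set0) /\
  (forall x a, x \in V1 -> a \in V2 ->
     traceV1 K V1 V2 x :&: traceV2 K V1 V2 a =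
       if [set x; a] \in K then [set [set (x, a)]] else set0).
Proof.
case=> scK _ _ dis _ _ _; split.
  move=> x y _ _ nxy; apply/setP=> G; rewrite in_setI in_set0.
  apply/negP=> /andP[/mem_traceV1[GS Gx] /mem_traceV1[_ Gy]].
  have /set0Pn[p pG] := slicing_neq0 GS.
  by rewrite -(Gx p pG) (Gy p pG) eqxx in nxy.
move=> x a xV1 aV2; rewrite -(single_vertex_slicing scK xV1 aV2 dis).
apply/setP=> G; rewrite in_setI; apply/andP/idP.
  case=> Gx Ga; have [GS _] := mem_traceV1 Gx.
  by rewrite (traceV1_traceV2_single Gx Ga) in GS *; rewrite GS inE.
case: ifP => [xaS /set1P-> | _]; last by rewrite in_set0.
by split; [apply: vertex_mem_traceV1 | apply: vertex_mem_traceV2].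
Qed.
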